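(* Let $\mathcal{G}$ be a MAG on vertex set $V$ and let $u$ be any structural imset over $V$ such that $\mathcal{I}_u=\mathcal{I}_{\mathcal{G}}$. Let $c$ be its characteristic imset, $c(S)=1-\sum_{T:\,S\subseteq T\subseteq V}u(T)$. Then $c$ is integer valued and: (i) if $S\in\mathcal{S}(\mathcal{G})$ then $c(S)=1$; (ii) if $S\notin\mathcal{S}(\mathcal{G})$ then $c(S)\le 0$.
   Context: A MAG is an acyclic directed mixed graph (directed and bidirected edges, no directed cycles) with $\mathrm{sib}(v)\cap\mathrm{an}(v)=\emptyset$ for all $v$ and in which every nonadjacent pair is m-separated by some set (a path is m-connecting given $C$ if all its colliders lie in $\mathrm{an}(C)$ and all noncolliders lie outside $C$). $\mathrm{barren}(W)=\{w\in W:\mathrm{de}(w)\cap W=\{w\}\}$; a nonempty $H$ is a head if $\mathrm{barren}(H)=H$ and $H$ lies in one district of $\mathcal{G}_{\mathrm{an}(H)}$; $\mathrm{tail}(H)=(\mathrm{dis}_{\mathrm{an}(H)}(H)\setminus H)\cup\mathrm{pa}(\mathrm{dis}_{\mathrm{an}(H)}(H))$; $\mathcal{S}(\mathcal{G})=\{H\cup A:H\text{ a head},A\subseteq\mathrm{tail}(H)\}$. Imsets are integer functions on $\mathcal{P}(V)$; $\delta_A$ is the indicator of $A$; $u_{\langle A,B|C\rangle}=\delta_{A\cup B\cup C}-\delta_{A\cup C}-\delta_{B\cup C}+\delta_C$ for disjoint $A,B,C$, elementary when $|A|=|B|=1$; combinatorial = nonnegative integer combination of elementary imsets; structural = some positive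 integer multiple is combinatorial. $\langle A,B|C\rangle$ is represented in $u$ if $ku-u_{\langle A,B|C\rangle}$ is combinatorial for some $k\in\mathbb{N}$; $\mathcal{I}_u$ is the set of represented triples; $\mathcal{I}_{\mathcal{G}}$ is the set of triples $\langle A,B|C\rangle$ with $A$ and $B$ m-separated by $C$. *)

From HB Require Import structures.
From mathcomp Require Import all_boot all_order all_algebra.
Set Implicit Arguments. Unset Strict Implicit. Unset Printing Implicit Defensive.
Import Order.TTheory GRing.Theory Num.Theory.

Section MAG.
Variable V : finType.
(* d x y : directed edge x -> y ;  b x y : bidirected edge x <-> y *)
Variables (d b : rel V).

Definition adj (x y : V) : bool := [|| d x y, d y x | b x y].
Definition arrowhead (x y : V) : bool := d x y || b x y.

(* ancestors of a set (each vertex is its own ancestor) *)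
Definition anc (A : {set V}) : {set V} := [set w | [exists a in A, connect d w a]].

Definition mconnecting (C : {set V}) (a : V) (q : seq V) : Prop :=
  let p := a :: q in
  [/\ uniq p,
      (forall i, i.+1 < size p -> adj (nth a p i) (nth a p i.+1)) &
      (forall i, 0 < i -> i.+1 < size p ->
         if arrowhead (nth a p i.-1) (nth a p i) && arrowhead (nth a p i.+1) (nth a p i)
         then nth a p i \in anc C
         else nth a p i \notin C)].

Definition msep (A B C : {set V}) : Prop :=
  forall a bb q, a \in A -> bb \in B -> last a q = bb -> ~ mconnecting C a q.

Definition is_MAG : Prop :=
  [/\ [/\ irreflexive d, irreflexive b & symmetric b],
      (forall x y, d x y -> ~~ connect d y x),
      (forall v w, b v w -> ~~ connect d w v) &
      (forall x y, x != y -> ~~ adj x y ->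
         exists C : {set V}, [/\ x \notin C, y \notin C & msep [set x] [set y] C])].

Definition barren (W : {set V}) : {set V} :=
  [set w in W | [forall w' in W, connect d w w' ==> (w' == w)]].

Definition brel_in (W : {set V}) : rel V := fun x y => [&& x \in W, y \in W & b x y].

Definition dis_in (W : {set V}) (v : V) : {set V} :=
  [set w in W | connect (brel_in W) v w].

Definition is_head (H : {set V}) : Prop :=
  [/\ H != set0, barren H = H &
      forall h1 h2, h1 \in H -> h2 \in H -> connect (brel_in (anc H)) h1 h2].

Definition dis_head (H : {set V}) : {set V} := \bigcup_(h in H) dis_in (anc H) h.

Definition pa (D : {set V}) : {set V} := [set w | [exists x in D, d w x]].

Definition tail (H : {set V}) : {set V} := (dis_head H :\: H) :|: pa (dis_head H).

Definition in_SG (S : {set V}) : Prop :=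
  exists H A : {set V}, [/\ is_head H, A \subset tail H & S = H :|: A].

End MAG.

Section Imsets.
Variable V : finType.
Local Open Scope ring_scope.

Definition imsetV := {set V} -> int.

Definition delta (A : {set V}) : imsetV := fun S => (S == A)%:Z.

Definition u_triple (A B C : {set V}) : imsetV :=
  fun S => delta (A :|: B :|: C) S - delta (A :|: C) S - delta (B :|: C) S + delta C S.

Definition disjoint_triple (A B C : {set V}) : bool :=
  [&& [disjoint A & B], [disjoint A & C] & [disjoint B & C]].

(* a, b, C index the elementary imsetV u_<{a},{b}|C> *)
Definition elementary_index (a b : V) (C : {set V}) : bool :=
  [&& a != b, a \notin C & b \notin C].

Definition combinatorial (u : imsetV) : Prop :=
  exists k : V -> V -> {set V} -> nat,
    (forall a b C, (0 < k a b C)%N -> elementary_index a b C) /\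
    forall S, u S = \sum_(a : V) \sum_(b : V) \sum_(C : {set V})
                      (k a b C)%:Z * u_triple [set a] [set b] C S.

Definition structural (u : imsetV) : Prop :=
  exists n : nat, (0 < n)%N /\ combinatorial (fun S => n%:Z * u S).

Definition represented (u : imsetV) (A B C : {set V}) : Prop :=
  exists k : nat, combinatorial (fun S => k%:Z * u S - u_triple A B C S).

Definition char_imset (u : imsetV) : imsetV :=
  fun S => 1 - \sum_(T : {set V} | S \subset T) u T.

End Imsets.

(* Write c(S) = 1 − m(S) with m(S) = Σ_{T ⊇ S} u(T).  For an elementary imset u⟨a,b|C⟩, m(S)
   is the indicator of {a,b} ⊆ S ⊆ abC.  Expanding a multiple n·u of u into elementary imsets,
   every elementary triple that occurs is represented in u, hence an m-separation.

   If S ∈ 𝒮(G) has head H and S ⊆ abC, then a and b are joined through the district of H by a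
   path whose inner vertices are colliders in an(H) ⊆ an(C ∪ {a,b}); rerouting each collider
   outside an(C) along a directed path to an endpoint gives an m-connecting path given C.  So
   no elementary term charges S, and c(S) = 1.

   If S ∉ 𝒮(G) is nonempty, let H = barren(S).  Either two vertices of H are not joined by
   bidirected edges inside an(H), or H is a head and some s ∈ S \ H lies outside tail(H).  Such
   a pair is m-separated by an(H) minus the pair: an m-connecting path would stay in the
   ancestral set an(H) with every inner vertex a collider, so it would leave the first vertex
   into an arrowhead and go on by bidirected edges.  The triple is then represented in u, which
   forces m(S) ≥ 1 and c(S) ≤ 0. *)

From mathcomp Require Import all_boot all_order all_algebra.
Import Order.TTheory GRing.Theory Num.Theory.

Set Implicit Arguments.
Unset Strict Implicit.
Unset Printing Implicit Defensive.

(** * Sequences and their consecutive triples *)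

Section Sequences.
Variable T : eqType.
Implicit Types (p q s t : seq T) (x y z w : T).

Lemma rev_cons_last x q : rev (x :: q) = last x q :: rev (belast x q).
Proof. by rewrite lastI rev_rcons. Qed.

Lemma last_rev_belast x q : last (last x q) (rev (belast x q)) = x.
Proof. by rewrite -(last_cons x) -rev_cons_last rev_cons last_rcons. Qed.

Lemma has_split_last (P : pred T) p : has P p ->
  exists s w t, [/\ p = s ++ w :: t, P w & ~~ has P t].
Proof.
elim: p => [|x p IH] //= /orP[Px|hp]; last first.
  by have [s [w [t [-> Pw nt]]]] := IH hp; exists (x :: s), w, t.
case hp: (has P p); last by exists [::], x, p; rewrite hp.
by have [s [w [t [-> Pw nt]]]] := IH hp; exists (x :: s), w, t.
Qed.

Lemma last_cons_cat x p s w t : x :: p = s ++ w :: t -> last x p = last w t.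
Proof. by move=> E; rewrite -[last x p]/(last x (x :: p)) E last_cat. Qed.

Fixpoint triples p : seq (T * T * T) :=
  if p is x :: ((y :: z :: _) as p') then (x, y, z) :: triples p' else [::].

Definition junction s w t : seq (T * T * T) :=
  if s is x :: s' then if t is y :: _ then [:: (last x s', w, y)] else [::] else [::].

Definition flip_triple (u : T * T * T) := (u.2, u.1.2, u.1.1).

Lemma triples_cat s w t :
  triples (s ++ w :: t) = triples (rcons s w) ++ junction s w t ++ triples (w :: t).
Proof.
elim: s => [|x s IH] //=.
case: s IH => [|y s] IH /=; first by case: t {IH}.
by case: s IH => [|z s] /= ->.
Qed.

Lemma junction_rcons s x w y t : junction (rcons s x) w (y :: t) = [:: (x, w, y)].
Proof. by case: s => [|z s] //=; rewrite last_rcons. Qed.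

Lemma triples_rev p : triples (rev p) = rev (map flip_triple (triples p)).
Proof.
elim: p => [|x [|y [|z p]] IH] //.
have -> : rev [:: x, y, z & p] = rev (z :: p) ++ [:: y; x].
  by rewrite !rev_cons -!cats1 -catA.
rewrite triples_cat cats0 -rev_cons IH rev_cons junction_rcons.
by rewrite [triples (x :: _)]/= map_cons rev_cons -cats1.
Qed.

Lemma all_triples_nthP x0 (f : pred (T * T * T)) p :
  (forall i, 0 < i -> i.+1 < size p -> f (nth x0 p i.-1, nth x0 p i, nth x0 p i.+1))
  <-> all f (triples p).
Proof.
elim: p => [|x [|y [|z p]] IH]; try by split=> // _ [|[|i]].
rewrite [triples _]/= [all _ _]/=; split.
  move=> H; rewrite (H 1) //; apply/IH => -[|i] // _ Hi; exact: (H i.+2).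
by case/andP=> fxyz /IH H [|[|i]] // _ Hi; exact: (H i.+1).
Qed.

Lemma mem_triples_split x y z p :
  (x, y, z) \in triples p -> exists s t, p = s ++ [:: x, y, z & t].
Proof.
elim: p => [|u [|v [|w p]] IH] //.
rewrite inE => /orP[/eqP[-> -> ->]|/IH[s [t ->]]]; first by exists [::], p.
by exists (u :: s), t.
Qed.

Lemma triples_mid x q y : y \in q -> y != last x q ->
  exists u w, (u, y, w) \in triples (x :: q).
Proof.
case/splitPr=> s [|w t] yl; first by rewrite last_cat eqxx in yl.
exists (last x s), w; rewrite -cat_cons triples_cat mem_cat; apply/orP; right.
by rewrite /= mem_head.
Qed.

Lemma mem_triples_behead u p : u \in triples p -> u.1.2 \in behead p.
Proof.
case: u => [[x y] z] /mem_triples_split[[|v s] [t ->]] /=; first by rewrite mem_head.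
by rewrite mem_cat !inE eqxx !orbT.
Qed.

Lemma triples_mem u p : u \in triples p -> [/\ u.1.1 \in p, u.1.2 \in p & u.2 \in p].
Proof.
by case: u => [[x y] z] /mem_triples_split[s [t ->]]; rewrite /= !(mem_cat, inE) !eqxx !orbT.
Qed.

Lemma triples_sorted (e : rel T) u p : sorted e p -> u \in triples p ->
  e u.1.1 u.1.2 && e u.1.2 u.2.
Proof.
case: u => [[x y] z] ep /mem_triples_split[s [t Ep]].
by move: ep; rewrite Ep sorted_cat_cons /= => /andP[_ /and3P[-> -> _]].
Qed.

Lemma triples_uniq_mid u x q : uniq (x :: q) -> u \in triples (x :: q) ->
  (u.1.2 != x) && (u.1.2 != last x q).
Proof.
case: u => [[y v] z] U /mem_triples_split[s [t Ep]] /=.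
have {}Ep : x :: q = (rcons s y) ++ v :: z :: t by rewrite Ep cat_rcons.
have xs : x \in rcons s y by case: (s) Ep => [|w s'] [-> _]; rewrite ?mem_head.
move: U; rewrite Ep cat_uniq => /and3P[_ /hasPn/(_ v (mem_head _ _)) vs /andP[vt _]].
rewrite -[last x q]/(last x (x :: q)) Ep last_cat /=.
by rewrite (contraNneq _ vs) ?(contraNneq _ vt) // => ->; rewrite ?mem_last.
Qed.

End Sequences.

Section MixedGraph.
Variables (V : finType) (d b : rel V).
Hypothesis b_sym : symmetric b.
Hypothesis d_acyclic : forall x y, d x y -> ~~ connect d y x.
Hypothesis b_not_anc : forall x y, b x y -> ~~ connect d y x.

Local Notation adj := (adj d b).
Local Notation arrowhead := (arrowhead d b).
Local Notation anc := (anc d).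
Local Notation mconnecting := (mconnecting d b).
Local Notation msep := (msep d b).
Implicit Types (x y z u v w : V) (p q : seq V) (A B C D H K S : {set V}).

Lemma d_irr : irreflexive d.
Proof. by move=> x; apply/negP => /d_acyclic; rewrite connect0. Qed.

Lemma adj_sym : symmetric adj.
Proof. by move=> x y; rewrite /adj b_sym orbCA. Qed.

Lemma adj_tail x y : adj x y -> ~~ arrowhead x y -> d y x.
Proof. by rewrite /adj /arrowhead; case: (d x y); case: (b x y); case: (d y x). Qed.

Lemma tail_no_arrowhead x y : d x y -> ~~ arrowhead y x.
Proof.
move=> dxy; rewrite /arrowhead negb_or; apply/andP; split.
  by apply: contraNN (d_acyclic dxy); apply: connect1.
by apply/negP => /b_not_anc; rewrite connect1.
Qed.

Lemma arrowheads_bidirected x y : arrowhead x y -> arrowhead y x -> b x y.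
Proof.
case/orP=> [dxy|//]; rewrite -b_sym; apply: contraTT => _.
exact: tail_no_arrowhead.
Qed.

Lemma ancP A x : reflect (exists2 y, y \in A & connect d x y) (x \in anc A).
Proof.
rewrite inE; apply: (iffP existsP) => [[y /andP[yA xy]]|[y yA xy]]; first by exists y.
by exists y; rewrite yA.
Qed.

Lemma anc_connect A x y : connect d x y -> y \in anc A -> x \in anc A.
Proof. by move=> xy /ancP[z zA yz]; apply/ancP; exists z; rewrite ?(connect_trans xy). Qed.

Lemma sub_anc A : A \subset anc A.
Proof. by apply/subsetP => x xA; apply/ancP; exists x. Qed.

Lemma anc_subset A B : A \subset B -> anc A \subset anc B.
Proof. by move/subsetP=> AB; apply/subsetP=> x /ancP[y /AB yB xy]; apply/ancP; exists y. Qed.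

Lemma connect_antisym x y : connect d x y -> connect d y x -> x = y.
Proof.
case/connectP=> [[|z p] /= ]; first by move=> _ ->.
case/andP=> dxz pz -> yx; move: (d_acyclic dxz); rewrite (connect_trans _ yx) //.
by apply/connectP; exists p.
Qed.

Lemma exists_sink A x : x \in A ->
  exists2 w, w \in A & connect d x w /\ {in A, forall w', connect d w w' -> w' = w}.
Proof.
move=> xA; pose P w := (w \in A) && connect d x w.
have [|w /andP[wA xw] wmin] := arg_minnP (fun w => #|[set y | connect d w y]|) (_ : P x).
  by rewrite /P xA connect0.
exists w => //; split=> // w' w'A ww'; apply/eqP; apply: contraT => w'w.
have : #|[set y | connect d w' y]| < #|[set y | connect d w y]|.
  apply: proper_card; rewrite properEneq; apply/andP; split.
    apply: contra w'w => /eqP E; have : w \in [set y | connect d w' y] by rewrite E inE.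
    by rewrite inE => w'w; rewrite (connect_antisym ww' w'w).
  by apply/subsetP=> y; rewrite !inE; apply: connect_trans.
by rewrite ltnNge wmin // /P w'A (connect_trans xw).
Qed.

(** * Rerouting blocked colliders *)

Definition collider (t : V * V * V) := arrowhead t.1.1 t.1.2 && arrowhead t.2 t.1.2.

Definition active K C t := if collider t then t.1.2 \in K else t.1.2 \notin C.

(* [K = anc C] is m-connection given [C]; taking for [K] the ancestors of [C] and of the
   endpoints gives the paths that rerouting turns into m-connecting ones. *)
Definition connecting K C p := [&& uniq p, sorted adj p & all (active K C) (triples p)].

Definition blocked C t := collider t && (t.1.2 \notin anc C).

Definition open_noncollider C t := ~~ collider t && (t.1.2 \notin C).

Lemma mconnectingE C x q : mconnecting C x q <-> connecting (anc C) C (x :: q).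
Proof.
rewrite /mconnecting /connecting; split.
  case=> U A act; apply/and3P; split=> //; first exact/(sortedP x).
  by apply/(all_triples_nthP x) => i i0 ip; rewrite /active /collider act.
by case/and3P=> U /(sortedP x) A /(all_triples_nthP x) act; split.
Qed.

Lemma collider_flip t : collider (flip_triple t) = collider t.
Proof. by rewrite /collider andbC. Qed.

Lemma connecting_rev K C p : connecting K C (rev p) = connecting K C p.
Proof.
rewrite /connecting rev_uniq rev_sorted (eq_sorted (fun x y => adj_sym y x)).
by rewrite triples_rev all_rev all_map; congr [&& _, _ & _]; apply: eq_all => t;
  rewrite /= /active collider_flip.
Qed.

Lemma count_blocked_rev C p :
  count (blocked C) (triples (rev p)) = count (blocked C) (triples p).
Proof.
rewrite triples_rev count_rev count_map; apply: eq_count => t.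
by rewrite /= /blocked collider_flip.
Qed.

Lemma connecting_unblocked K C p :
  ~~ has (blocked C) (triples p) -> connecting K C p -> connecting (anc C) C p.
Proof.
move=> /hasPn nb /and3P[U P A]; rewrite /connecting U P; apply/allP => t tp.
move: (allP A t tp) (nb t tp); rewrite /active /blocked.
by case: (collider t) => //= _; rewrite negbK.
Qed.

Lemma rev_dipath_open C w (D t : seq V) : path d w D -> {subset w :: D <= [predC C]} ->
  all (open_noncollider C) (triples (rcons (rev D) w) ++ junction (rev D) w t).
Proof.
move=> wD DC; rewrite all_cat; apply/andP; split.
  rewrite -rev_cons triples_rev all_rev all_map; apply/allP => u uD /=.
  have /andP[_ du] := triples_sorted (p := w :: D) wD uD.
  rewrite /open_noncollider collider_flip /collider (negbTE (tail_no_arrowhead du)) andbF.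
  by apply: DC; rewrite inE (mem_triples_behead uD) orbT.
case: D wD DC => [|y D] //= /andP[dwy _] DC; rewrite rev_cons.
case: t => [|z t]; first by case: (rcons _ _).
rewrite junction_rcons /= andbT /open_noncollider /collider.
by rewrite (negbTE (tail_no_arrowhead dwy)); apply: DC; rewrite mem_head.
Qed.

Lemma open_noncollider_active K C t : open_noncollider C t -> active K C t.
Proof. by rewrite /active; case/andP=> /negbTE ->. Qed.

Lemma open_noncollider_unblocked C t : open_noncollider C t -> ~~ blocked C t.
Proof. by rewrite /blocked; case/andP=> /negbTE ->. Qed.

Lemma connecting_splice K C s w t (D : seq V) :
  connecting K C (s ++ w :: t) -> path d w D -> uniq (w :: D) ->
  {subset w :: D <= [predC C]} -> {in D, forall y, y \notin t} ->
  connecting K C (rev D ++ w :: t).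
Proof.
case/and3P=> U P A wD; rewrite cons_uniq => /andP[wnD uD] DC Dt; apply/and3P; split.
- move: U; rewrite !cat_uniq => /and3P[_ _ ->]; rewrite rev_uniq uD andbT.
  apply/hasPn => z; rewrite inE mem_rev => /orP[/eqP-> // | zt].
  by apply: contraL zt; apply: Dt.
- rewrite sorted_cat_cons -rev_cons rev_sorted (eq_sorted (fun x y => adj_sym y x)).
  rewrite [sorted _ _](sub_path _ wD) => [|x y dxy]; last by rewrite /adj dxy.
  by move: P; rewrite sorted_cat_cons => /andP[_ ->].
- rewrite triples_cat catA all_cat; apply/andP; split.
    by apply/allP => u /(allP (rev_dipath_open t wD DC)) /open_noncollider_active.
  by move: A; rewrite triples_cat !all_cat => /and3P[_ _ ->].
Qed.

(* The blocked collider [v = t.1.2] is bypassed: cut the path at its last vertex [w] on a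
   directed path from [v] to [x] and run that directed path backwards to [x].  The new inner
   vertices are noncolliders outside [C], being descendants of [v], which is not in [anc C]. *)
Lemma reroute_blocked_first K C x q t :
  connecting K C (x :: q) -> t \in triples (x :: q) -> blocked C t -> connect d t.1.2 x ->
  exists q', [/\ last x q' = last x q, connecting K C (x :: q') &
    count (blocked C) (triples (x :: q')) < count (blocked C) (triples (x :: q))].
Proof.
case: t => [[u v] z] conn tq bt /connectP[r0 dr0 xr0].
have /andP[_ vC] := bt; rewrite /= in vC.
case: (shortenP dr0) xr0 => r dr ur _ xr {r0 dr0}.
have rC : {subset v :: r <= [predC C]}.
  move=> y /(path_connect dr) vy; rewrite inE; apply: contraNN vC => yC.
  by apply: anc_connect vy _; apply: (subsetP (sub_anc C)).
have [s [w [t [E wr nt]]]] : exists s w t,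
    [/\ x :: q = s ++ w :: t, w \in v :: r & ~~ has (mem (v :: r)) t].
  apply: has_split_last; apply/hasP; exists v; last exact: mem_head.
  by rewrite inE (mem_triples_behead tq) orbT.
have [s2 [D Er]] : exists s2 (D : seq V), v :: r = s2 ++ w :: D.
  by case/splitPr: wr => s2 D; exists s2, D.
have dD : path d w D.
  by move: dr; rewrite -[path _ _ _]/(sorted d (v :: r)) Er sorted_cat_cons => /andP[].
have uD : uniq (w :: D) by move: ur; rewrite Er cat_uniq => /and3P[].
have Dr : {subset w :: D <= v :: r} by move=> y yD; rewrite Er mem_cat yD orbT.
have Dt : {in D, forall y, y \notin t}.
  move=> y yD; apply: contra nt => yt; apply/hasP; exists y => //.
  by apply: Dr; rewrite inE yD orbT.
have E' : x :: (rev (belast w D) ++ t) = rev D ++ w :: t.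
  by rewrite xr (last_cons_cat Er) -cat_cons -rev_cons_last rev_cons cat_rcons.
have DC : {subset w :: D <= [predC C]} by move=> y /Dr /rC.
have conn' : connecting K C (s ++ w :: t) by rewrite -E.
exists (rev (belast w D) ++ t); split.
- by rewrite (last_cons_cat E') (last_cons_cat E).
- by rewrite E'; apply: connecting_splice conn' dD uD DC Dt.
rewrite E' E !triples_cat !catA count_cat [in X in _ < X]count_cat ltn_add2r.
have -> : count (blocked C) (triples (rcons (rev D) w) ++ junction (rev D) w t) = 0.
  apply/eqP; rewrite -leqn0 leqNgt -has_count; apply/hasPn => y.
  by move/(allP (rev_dipath_open t dD DC)); apply: open_noncollider_unblocked.
rewrite -has_count; apply/hasP; exists (u, v, z) => //.
move: tq; rewrite E triples_cat catA mem_cat => /orP[//|/mem_triples_behead vt].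
by case/negP: nt; apply/hasP; exists v; [exact: vt | exact: mem_head].
Qed.

Lemma reroute_blocked K C x q t :
  connecting K C (x :: q) -> t \in triples (x :: q) -> blocked C t ->
  connect d t.1.2 x \/ connect d t.1.2 (last x q) ->
  exists q', [/\ last x q' = last x q, connecting K C (x :: q') &
    count (blocked C) (triples (x :: q')) < count (blocked C) (triples (x :: q))].
Proof.
move=> conn tq bt [vx|vl]; first exact: reroute_blocked_first conn tq bt vx.
set l := last x q in vl *.
have Er : rev (x :: q) = l :: rev (belast x q) := rev_cons_last x q.
have [] := @reroute_blocked_first K C l (rev (belast x q)) (flip_triple t).
- by rewrite -Er connecting_rev.
- by rewrite -Er triples_rev mem_rev map_f.
- by rewrite /blocked collider_flip.
- exact: vl.
move=> q'; rewrite last_rev_belast => -[lq' conn' lt'].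
have Ex : rev (l :: q') = x :: rev (belast l q') by rewrite rev_cons_last lq'.
exists (rev (belast l q')); split.
- by rewrite -[x in last x _]lq' last_rev_belast.
- by rewrite -Ex connecting_rev.
- by rewrite -Ex count_blocked_rev; move: lt'; rewrite -Er count_blocked_rev.
Qed.

Lemma anc_setU2 C x y v :
  v \in anc (C :|: [set x; y]) -> v \notin anc C -> connect d v x \/ connect d v y.
Proof.
case/ancP=> w + vw vC; rewrite in_setU in_set2 => /or3P[wC|/eqP<-|/eqP<-]; [|by left|by right].
by case/negP: vC; apply: anc_connect vw _; apply: (subsetP (sub_anc C)).
Qed.

Lemma connecting_mconnecting C x q :
  connecting (anc (C :|: [set x; last x q])) C (x :: q) ->
  exists q', last x q' = last x q /\ mconnecting C x q'.
Proof.
have [n] := ubnP (count (blocked C) (triples (x :: q))).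
elim: n q => // n IH q lt_n conn.
have [|nb] := boolP (has (blocked C) (triples (x :: q))); last first.
  by exists q; split=> //; apply/mconnectingE; apply: connecting_unblocked nb conn.
case/hasP=> t tq bt; have /andP[col vC] := bt.
have /and3P[_ _ /allP/(_ t tq)] := conn; rewrite /active col => vK.
have [q' [lq' conn' lt']] := reroute_blocked conn tq bt (anc_setU2 vK vC).
have [|q'' [lq'' mc]] := IH q' (leq_trans lt' lt_n); first by rewrite lq'.
by exists q''; rewrite lq'' lq'.
Qed.

Lemma connecting_not_msep C x y q : last x q = y ->
  connecting (anc (C :|: [set x; y])) C (x :: q) -> ~ msep [set x] [set y] C.
Proof.
move=> <- /connecting_mconnecting[q' [lq' mc]] sep.
by apply: (sep x (last x q) q' _ _ lq' mc); rewrite inE.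
Qed.

(** * Collider paths through a district *)

Definition edge_into D x y :=
  [&& adj x y, (y \in D) ==> arrowhead x y & (x \in D) ==> arrowhead y x].

Definition collider_path D x y q :=
  [/\ last x q = y, uniq (x :: q), path (edge_into D) x q & {subset x :: q <= D :|: [set x; y]}].

Lemma edge_into_sym D : symmetric (edge_into D).
Proof. by move=> x y; rewrite /edge_into adj_sym; case: (adj y x); rewrite //= andbC. Qed.

Lemma collider_path_rev D x y q :
  collider_path D x y q -> collider_path D y x (rev (belast x q)).
Proof.
case=> <- U P PD; split.
- exact: last_rev_belast.
- by rewrite -rev_cons_last rev_uniq.
- by rewrite rev_path (eq_path (fun u v => edge_into_sym D v u)).
- by move=> z; rewrite [[set _; x]]setUC -rev_cons_last mem_rev => /PD.
Qed.

Lemma collider_path_connecting D K C x y q :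
  D \subset K -> collider_path D x y q -> connecting K C (x :: q).
Proof.
move=> DK [yq U P PD]; apply/and3P; split=> //; first by apply: sub_path P => u v /andP[].
apply/allP => t tq; have /andP[tx ty] := triples_uniq_mid U tq.
have [_ tp _] := triples_mem tq.
have tD : t.1.2 \in D by move: (PD _ tp); rewrite !inE (negbTE tx) -yq (negbTE ty) !orbF.
have /andP[/and3P[_ /implyP e1 _] /and3P[_ _ /implyP e2]] := triples_sorted (p := x :: q) P tq.
by rewrite /active /collider e1 // e2 // (subsetP DK).
Qed.

Definition bconnected D := {in D &, forall x y, connect (brel_in b D) x y}.

Lemma brel_in_sym W : symmetric (brel_in b W).
Proof. by move=> x y; rewrite /brel_in b_sym andbCA. Qed.

Lemma brel_in_connect_mem W x y : connect (brel_in b W) x y -> x \in W -> y \in W.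
Proof.
case/connectP=> p + ->; elim: p x => //= z p IH x /andP[/and3P[_ zW _] zp] _.
exact: IH zp zW.
Qed.

Lemma bconnected_collider_path D x y :
  bconnected D -> x \in D -> y \in D -> exists q, collider_path D x y q.
Proof.
move=> Dc xD yD; case/connectP: (Dc x y xD yD) => p0 p0P ->.
case: (shortenP p0P) => q qP U _; exists q; split=> //.
  apply: sub_path qP => u v /and3P[uD vD buv].
  by rewrite /edge_into /adj /arrowhead buv b_sym buv !orbT !implybT.
by move=> z /(path_connect qP) /brel_in_connect_mem/(_ xD) zD; rewrite inE zD.
Qed.

Lemma collider_path_parent D x z y q : x \notin D -> x != y -> d x z -> z \in D ->
  collider_path D z y q -> collider_path D x y (z :: q).
Proof.
move=> xD xy dxz zD [yq U P PD]; split=> //.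
- rewrite cons_uniq U andbT; apply/negP => /PD.
  by rewrite !inE (negbTE xD) (negbTE xy) orbF => /eqP xz; rewrite xz zD in xD.
- by rewrite /= P /edge_into /adj /arrowhead dxz zD (negbTE xD).
- move=> u; rewrite inE => /orP[/eqP->|/PD]; first by rewrite !inE eqxx orbT.
  by rewrite !inE => /or3P[->|/eqP->|->]; rewrite ?zD ?orbT.
Qed.

Lemma collider_path_from D x y : bconnected D -> x \in D -> y \in D :|: pa d D ->
  exists q, collider_path D x y q.
Proof.
move=> Dc xD; have [yD _|yD] := boolP (y \in D); first exact: bconnected_collider_path.
rewrite in_setU (negbTE yD) inE => /existsP[z /andP[zD dyz]].
have [q zx] := bconnected_collider_path Dc zD xD.
have yx : y != x by apply: contraNneq yD => ->.
by exists (rev (belast y (z :: q))); apply/collider_path_rev/collider_path_parent.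
Qed.

Lemma collider_path_exists D x y : bconnected D -> x != y ->
  x \in D :|: pa d D -> y \in D :|: pa d D -> exists q, collider_path D x y q.
Proof.
move=> Dc xy; have [xD _|xD] := boolP (x \in D); first exact: collider_path_from.
rewrite in_setU (negbTE xD) inE => /existsP[z /andP[zD dxz]] yD.
have [q zy] := collider_path_from Dc zD yD.
by exists (z :: q); apply: collider_path_parent.
Qed.

Local Notation dis_head := (dis_head d b).

Lemma dis_headP H x : reflect
  (exists2 h, h \in H & (x \in anc H) && connect (brel_in b (anc H)) h x) (x \in dis_head H).
Proof.
apply: (iffP bigcupP) => [[h hH]|[h hH xh]]; first by rewrite inE => xh; exists h.
by exists h => //; rewrite inE.
Qed.

Lemma sub_dis_head H : H \subset dis_head H.
Proof.
apply/subsetP => h hH; apply/dis_headP; exists h; rewrite ?connect0 ?andbT //.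
exact: (subsetP (sub_anc H)).
Qed.

Lemma dis_head_anc H : dis_head H \subset anc H.
Proof. by apply/subsetP => x /dis_headP[h _ /andP[]]. Qed.

Lemma dis_head_closed H x y :
  x \in dis_head H -> connect (brel_in b (anc H)) x y -> y \in dis_head H.
Proof.
case/dis_headP=> h hH /andP[xA hx] xy; apply/dis_headP; exists h => //.
by rewrite (brel_in_connect_mem xy xA) (connect_trans hx xy).
Qed.

Lemma head_bconnected H : is_head d b H -> bconnected (dis_head H).
Proof.
case=> _ _ Hc x y xD yD.
have xy : connect (brel_in b (anc H)) x y.
  have sym := sym_connect_sym (brel_in_sym (anc H)).
  case/dis_headP: xD => h1 h1H /andP[_]; rewrite sym => xh1.
  case/dis_headP: yD => h2 h2H /andP[_ h2y].
  exact: connect_trans (connect_trans xh1 (Hc _ _ h1H h2H)) h2y.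
case/connectP: xy => p xp ->; apply/connectP; exists p => //.
apply: (@sub_in_path _ (mem (dis_head H))) (xp) => [u v uD vD /and3P[_ _ buv]|].
  by rewrite /brel_in uD vD.
by apply/allP => z /(path_connect xp) /(dis_head_closed xD).
Qed.

Lemma head_tail_sub H : H :|: tail d b H \subset dis_head H :|: pa d (dis_head H).
Proof.
apply/subsetP => x; rewrite /tail !in_setU in_setD.
by case/or3P=> [xH|/andP[_ ->]|->]; rewrite ?orbT // (subsetP (sub_dis_head H)).
Qed.

Lemma in_SG_not_msep S C x y : in_SG d b S -> x \in S -> y \in S -> x != y ->
  S \subset x |: (y |: C) -> ~ msep [set x] [set y] C.
Proof.
case=> H [A [hH At ->]] xS yS xy SC.
have SD : H :|: A \subset dis_head H :|: pa d (dis_head H).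
  by apply: subset_trans (head_tail_sub H); rewrite setUS.
have [q cp] := collider_path_exists (head_bconnected hH) xy (subsetP SD _ xS) (subsetP SD _ yS).
have [yq _ _ _] := cp.
have DK : dis_head H \subset anc (C :|: [set x; y]).
  apply: subset_trans (dis_head_anc H) (anc_subset _).
  apply: subset_trans (subsetUl H A) (subset_trans SC _).
  by apply/subsetP => z; rewrite !inE => /or3P[]->; rewrite ?orbT.
exact: connecting_not_msep yq (collider_path_connecting C DK cp).
Qed.

(** * Separations below a barren set *)

Lemma noncollider_child x v z : adj x v -> adj v z -> ~~ collider (x, v, z) -> d v x || d v z.
Proof.
move=> xv vz; rewrite /collider negb_and => /orP[nxv|nzv]; first by rewrite (adj_tail xv nxv).
by rewrite (adj_tail (_ : adj z v) nzv) ?orbT // adj_sym.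
Qed.

(* A vertex off [anc H] that is maximal for [d] among such path vertices would have to be a
   noncollider, hence have a child on the path, also off [anc H]. *)
Lemma connecting_sub_anc H K C x q : K \subset anc H -> connecting K C (x :: q) ->
  x \in anc H -> last x q \in anc H -> {subset x :: q <= anc H}.
Proof.
move=> KH /and3P[_ P A] xH lH; apply/allP; apply: contraT => /allPn[u0 u0p u0H].
pose X := [set u | (u \in x :: q) && (u \notin anc H)].
have u0X : u0 \in X by rewrite inE u0p u0H.
have [w] := exists_sink u0X.
rewrite inE => /andP[wp wH] [_ wsink].
have wq : w \in q by move: wp; rewrite inE => /orP[/eqP wx|//]; rewrite wx xH in wH.
have wl : w != last x q by apply: contraNneq wH => ->.
have [u [z t]] := triples_mid wq wl; have [up _ zp] := triples_mem t.
have := allP A _ t; rewrite /active /=; case: ifP => [_ wK|ncol _].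
  by rewrite (subsetP KH _ wK) in wH.
have [c cp dwc] : exists2 c, c \in x :: q & d w c.
  have /andP[uw wz] := triples_sorted P t.
  by case/orP: (noncollider_child uw wz (negbT ncol)) => dw; [exists u | exists z].
have cH : c \notin anc H by apply: contraNN wH => /(anc_connect (connect1 dwc)).
have cw : c = w by apply: wsink (connect1 dwc); rewrite inE cp cH.
by rewrite cw d_irr in dwc.
Qed.

Lemma colliders_bidirected x z r : all collider (triples [:: x, z & r]) ->
  arrowhead (last x (belast z r)) (last z r) -> arrowhead x z && path b z r.
Proof.
elim: r x z => [|w r IH] x z; first by rewrite andbT.
have -> : triples [:: x, z, w & r] = (x, z, w) :: triples [:: z, w & r] by [].
case/andP=> /andP[xz wz] cols last_edge; have /andP[zw wr] := IH z w cols last_edge.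
by rewrite xz /= arrowheads_bidirected.
Qed.

(* By [connecting_sub_anc] the path stays in [anc H], where the separating set leaves no
   room for noncolliders; so past its first edge the path is bidirected. *)
Lemma mconnecting_anc_sep H x y q : x != y -> x \in anc H -> y \in anc H ->
  {in anc H, forall w, ~~ d y w} -> last x q = y ->
  mconnecting (anc H :\: [set x; y]) x q ->
  exists z, [/\ arrowhead x z, z \in anc H & connect (brel_in b (anc H)) z y].
Proof.
move=> xy xH yH ych yq /mconnectingE conn.
have CH : anc (anc H :\: [set x; y]) \subset anc H.
  by apply/subsetP => w /ancP[c /setDP[cH _] wc]; apply: anc_connect wc cH.
have inH := connecting_sub_anc CH conn xH (etrans (congr1 _ yq) yH).
case/and3P: conn => U P A.
have cols : all collider (triples (x :: q)).
  apply/allP => t tq; move: (allP A t tq); rewrite /active; case: ifP => // _.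
  have /andP[tx tl] := triples_uniq_mid U tq; have [_ tp _] := triples_mem tq.
  by rewrite in_setD in_set2 (negbTE tx) -yq (negbTE tl) inH.
case: q => [|z r] in yq U P A cols inH *; first by rewrite -yq eqxx in xy.
rewrite /= in yq.
have last_edge : arrowhead (last x (belast z r)) (last z r).
  move: P; rewrite -[sorted _ _]/(path adj x (z :: r)) (lastI z r) rcons_path => /andP[_ pl].
  have pen : last x (belast z r) \in x :: z :: r.
    by rewrite (lastI x) mem_rcons inE mem_last orbT.
  by apply: contraNT (ych _ (inH _ pen)) => /(adj_tail pl); rewrite yq.
have /andP[xz bzr] := colliders_bidirected cols last_edge.
have zH : z \in anc H by rewrite inH // !inE eqxx orbT.
exists z; split=> //; rewrite -yq.
apply: (path_connect (p := r)) (mem_last z r).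
apply: (@sub_in_path _ (mem (anc H))) bzr => [u v uH vH buv|]; first by rewrite /brel_in uH vH.
by apply/allP => u ur; apply: inH; rewrite inE ur orbT.
Qed.

Local Notation barren := (barren d).

Lemma barren_sub S : barren S \subset S.
Proof. by apply/subsetP => w; rewrite inE => /andP[]. Qed.

Lemma barren_desc S s : s \in S -> exists2 h, h \in barren S & connect d s h.
Proof.
case/exists_sink=> w wS [sw wsink]; exists w => //.
by rewrite inE wS; apply/forall_inP => w' w'S; apply/implyP => /(wsink _ w'S) ->.
Qed.

Lemma sub_anc_barren S : S \subset anc (barren S).
Proof. by apply/subsetP => s /barren_desc[h hH sh]; apply/ancP; exists h. Qed.

Lemma barren_id S : barren (barren S) = barren S.
Proof.
apply/setP => w; rewrite [in LHS]inE; apply/andP/idP => [[]//|wS]; split=> //.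
move: wS; rewrite inE => /andP[_ /forall_inP wmax]; apply/forall_inP => w' /[!inE] /andP[w'S _].
exact: wmax.
Qed.

Lemma barren_childless H h w : barren H = H -> h \in H -> w \in anc H -> ~~ d h w.
Proof.
move=> bH hH /ancP[h' h'H wh']; apply/negP => dhw.
move: hH; rewrite -bH inE => /andP[_ /forall_inP/(_ h' h'H)].
rewrite (connect_trans (connect1 dhw) wh') => /eqP hh.
by move: (d_acyclic dhw); rewrite -hh wh'.
Qed.

Lemma msep_unconnected_heads H h1 h2 : barren H = H -> h1 \in H -> h2 \in H ->
  ~~ connect (brel_in b (anc H)) h1 h2 -> msep [set h1] [set h2] (anc H :\: [set h1; h2]).
Proof.
move=> bH h1H h2H nc x y q /set1P-> /set1P-> lq mc.
have h12 : h1 != h2 by apply: contraNneq nc => ->.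
have HH := subsetP (sub_anc H).
have [z [h1z zH zh2]] :=
  mconnecting_anc_sep h12 (HH _ h1H) (HH _ h2H) (fun w => barren_childless bH h2H) lq mc.
have b1z : b h1 z by move: h1z; rewrite /arrowhead (negbTE (barren_childless bH h1H zH)).
by case/negP: nc; apply: connect_trans zh2; apply: connect1; rewrite /brel_in HH ?zH.
Qed.

Lemma msep_outside_tail H s h : is_head d b H -> s \in anc H -> s \notin H ->
  s \notin tail d b H -> h \in H -> msep [set s] [set h] (anc H :\: [set s; h]).
Proof.
move=> hH sA sH st hH' x y q /set1P-> /set1P-> lq mc.
have [_ bH _] := hH.
have sh : s != h by apply: contraNneq sH => ->.
have [z [sz zA zh]] := mconnecting_anc_sep sh sA (subsetP (sub_anc H) _ hH')
  (fun w => barren_childless bH hH') lq mc.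
have zD : z \in dis_head H.
  apply: dis_head_closed (subsetP (sub_dis_head H) _ hH') _.
  by rewrite (sym_connect_sym (brel_in_sym _)).
case/negP: st; rewrite /tail in_setU in_setD sH /=.
case/orP: sz => [dsz|bsz]; last first.
  by rewrite (dis_head_closed zD) // connect1 // /brel_in zA sA b_sym.
by apply/orP; right; rewrite inE; apply/existsP; exists z; rewrite zD.
Qed.

Lemma not_in_SG_sep S : S != set0 -> ~ in_SG d b S ->
  exists x y C, [/\ elementary_index x y C, x \in S, y \in S,
                    S \subset x |: (y |: C) & msep [set x] [set y] C].
Proof.
move=> S0 nS; set H := barren S.
suff [x [y [xS yS xy sep]]] : exists x y, [/\ x \in S, y \in S, x != y &
    msep [set x] [set y] (anc H :\: [set x; y])].
  exists x, y, (anc H :\: [set x; y]); split=> //.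
    by rewrite /elementary_index xy !inE !eqxx orbT.
  apply/subsetP => w wS; rewrite !in_setU1 in_setD in_set2 (subsetP (sub_anc_barren S) _ wS).
  by case: (w == x); case: (w == y).
have bH : barren H = H := barren_id S.
have HS := subsetP (barren_sub S).
have [Hc|] := boolP [forall h1 in H, [forall h2 in H, connect (brel_in b (anc H)) h1 h2]].
  have [s0 s0S] := set0Pn _ S0; have [h hH _] := barren_desc s0S.
  have hH0 : is_head d b H.
    split=> //; first by apply/set0Pn; exists h.
    by move=> h1 h2 h1H h2H; exact: (forall_inP (forall_inP Hc h1 h1H) h2 h2H).
  have : ~~ (S :\: H \subset tail d b H).
    apply/negP => sub; apply: nS; exists H, (S :\: H); split=> //.
    by rewrite -{1}(setID S H) (setIidPr (barren_sub S)).
  case/subsetPn => s /setDP[sS sH] st.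
  exists s, h; split=> //; [exact: HS | by apply: contraNneq sH => -> |].
  exact: msep_outside_tail hH0 (subsetP (sub_anc_barren S) _ sS) sH st hH.
case/forall_inPn => h1 h1H /forall_inPn[h2 h2H nc].
exists h1, h2; split; [exact: HS | exact: HS | | exact: msep_unconnected_heads].
by apply: contraNneq nc => ->.
Qed.

End MixedGraph.

(** * Upper sums of imsets *)

Section Imsets.
Variable V : finType.
Local Open Scope ring_scope.
Implicit Types (u w : imsetV V) (a b x : V) (C S X : {set V}).

Definition upper_sum u S : int := \sum_(T : {set V} | S \subset T) u T.

Definition in_elementary_range a b C S := [&& a \in S, b \in S & S \subset a |: (b |: C)].

Lemma elementary_disjoint a b C : elementary_index a b C -> disjoint_triple [set a] [set b] C.
Proof. by case/and3P=> ab aC bC; rewrite /disjoint_triple !disjoints1 !inE ab aC bC. Qed.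

Lemma sum_supersets_delta X S : \sum_(T : {set V} | S \subset T) delta X T = (S \subset X)%:Z.
Proof.
rewrite /delta big_mkcond (bigD1 X) //= eqxx big1 ?addr0; first by case: (S \subset X).
by move=> T /negbTE ->; case: (S \subset T).
Qed.

Lemma subset_setU1_notin x S X : x \notin S -> (S \subset x |: X) = (S \subset X).
Proof.
move=> xS; apply/idP/idP => [/subsetP SX|SX]; last exact: subset_trans SX (subsetU1 x X).
apply/subsetP => y yS; move/SX: (yS); rewrite in_setU1 => /predU1P[yx|//].
by rewrite -yx yS in xS.
Qed.

Lemma subset_mem_notin x S X : x \in S -> x \notin X -> (S \subset X) = false.
Proof. by move=> xS xX; apply: contraNF xX => /subsetP; apply. Qed.

Lemma upper_sum_elementary a b C S : elementary_index a b C ->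
  upper_sum (u_triple [set a] [set b] C) S = (in_elementary_range a b C S)%:Z.
Proof.
case/and3P=> ab aC bC.
rewrite /upper_sum /u_triple big_split /= !sumrB !sum_supersets_delta -setUA /in_elementary_range.
have [aS|aS] /= := boolP (a \in S); last first.
  by rewrite !(subset_setU1_notin _ aS); case: (S \subset b |: C); case: (S \subset C).
rewrite (subset_mem_notin aS aC) (@subset_mem_notin a S (b |: C) aS); last first.
  by rewrite in_setU1 negb_or ab.
have [bS|bS] /= := boolP (b \in S); last by rewrite setUCA (subset_setU1_notin _ bS) subrr.
rewrite (@subset_mem_notin b S (a |: C) bS) ?subr0 ?addr0 //.
by rewrite in_setU1 negb_or bC eq_sym ab.
Qed.

Lemma sum3_indicator (F : V -> V -> {set V} -> int) a b C :
  \sum_(a' : V) \sum_(b' : V) \sum_(C' : {set V})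
    ([&& a' == a, b' == b & C' == C] : nat)%:Z * F a' b' C' = F a b C.
Proof.
rewrite (bigD1 a) //= [X in _ + X]big1 ?addr0 => [|a' /negbTE a'a]; last first.
  by apply: big1 => b' _; apply: big1 => C' _; rewrite a'a mul0r.
rewrite (bigD1 b) //= [X in _ + X]big1 ?addr0 => [|b' /negbTE b'b]; last first.
  by apply: big1 => C' _; rewrite eqxx b'b mul0r.
rewrite (bigD1 C) //= [X in _ + X]big1 ?addr0 => [|C' /negbTE C'C]; last first.
  by rewrite !eqxx C'C mul0r.
by rewrite !eqxx mul1r.
Qed.

Section ElementaryCombination.
Variable k : V -> V -> {set V} -> nat.
Hypothesis k_elementary : forall a b C, (0 < k a b C)%N -> elementary_index a b C.

Definition elementary_comb T : int :=
  \sum_(a : V) \sum_(b : V) \sum_(C : {set V}) (k a b C)%:Z * u_triple [set a] [set b] C T.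

Lemma upper_sum_comb S : upper_sum elementary_comb S =
  \sum_(a : V) \sum_(b : V) \sum_(C : {set V}) (k a b C)%:Z * (in_elementary_range a b C S)%:Z.
Proof.
rewrite /upper_sum /elementary_comb exchange_big; apply: eq_bigr => a _.
rewrite exchange_big; apply: eq_bigr => b _; rewrite exchange_big; apply: eq_bigr => C _.
rewrite -mulr_sumr; have [->|kp] := posnP (k a b C); first by rewrite !mul0r.
by rewrite -upper_sum_elementary ?k_elementary.
Qed.

Lemma upper_sum_comb_ge0 S : 0 <= upper_sum elementary_comb S.
Proof. by rewrite upper_sum_comb; do 3!(apply: sumr_ge0 => ? _); rewrite mulr_ge0. Qed.

Lemma represented_of_coef u n a b C :
  (forall T, n%:Z * u T = elementary_comb T) -> (0 < k a b C)%N ->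
  represented u [set a] [set b] C.
Proof.
move=> nu kp.
pose k' a' b' C' := (k a' b' C' - [&& a' == a, b' == b & C' == C])%N.
exists n, k'; split=> [a' b' C' k'p|T]; first exact/k_elementary/(leq_trans k'p (leq_subr _ _)).
rewrite nu -(sum3_indicator (fun a' b' C' => u_triple [set a'] [set b'] C' T) a b C).
rewrite /elementary_comb -sumrB; apply: eq_bigr => a' _; rewrite -sumrB.
apply: eq_bigr => b' _; rewrite -sumrB; apply: eq_bigr => C' _.
by rewrite -mulrBl -subzn //; case: and3P => // -[/eqP-> /eqP-> /eqP->].
Qed.

End ElementaryCombination.

Lemma eq_upper_sum u w S : u =1 w -> upper_sum u S = upper_sum w S.
Proof. by move=> uw; apply: eq_bigr => T _. Qed.

Lemma combinatorial_upper_sum_ge0 w S : combinatorial w -> 0 <= upper_sum w S.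
Proof. by case=> k [kel wk]; rewrite (eq_upper_sum S wk) upper_sum_comb_ge0. Qed.

Lemma upper_sum_structural_eq0 u S : structural u ->
  (forall a b C, elementary_index a b C -> in_elementary_range a b C S ->
     ~ represented u [set a] [set b] C) ->
  upper_sum u S = 0.
Proof.
case=> n [n0 [k [kel nu]]] nrep.
suff : n%:Z * upper_sum u S = 0.
  by move/eqP; rewrite mulf_eq0 => /orP[/eqP[n_0]|/eqP//]; rewrite n_0 in n0.
have -> : n%:Z * upper_sum u S = upper_sum (elementary_comb k) S.
  by rewrite /upper_sum mulr_sumr; apply: eq_bigr => T _; apply: nu.
rewrite (upper_sum_comb kel); apply: big1 => a _; apply: big1 => b _; apply: big1 => C _.
have [->|kp] := posnP (k a b C); first by rewrite mul0r.
case r: (in_elementary_range a b C S); last by rewrite mulr0.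
by case: (nrep a b C (kel _ _ _ kp) r); exact: (represented_of_coef kel nu kp).
Qed.

Lemma upper_sum_represented_ge1 u a b C S : elementary_index a b C ->
  in_elementary_range a b C S -> represented u [set a] [set b] C -> 1 <= upper_sum u S.
Proof.
move=> ei r [k /(combinatorial_upper_sum_ge0 S)].
have -> : upper_sum (fun T => k%:Z * u T - u_triple [set a] [set b] C T) S =
    k%:Z * upper_sum u S - upper_sum (u_triple [set a] [set b] C) S.
  by rewrite /upper_sum sumrB mulr_sumr.
rewrite upper_sum_elementary // r subr_ge0 -!gtz0_ge1 => kmu.
by apply: contraTT kmu; rewrite -!leNgt => mu0; apply: mulr_ge0_le0.
Qed.

End Imsets.

Local Open Scope ring_scope.

Theorem proposition3p12 (V : finType) (d b : rel V) (HG : is_MAG d b)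
  (u : imsetV V) (Hu : structural u)
  (HI : forall A B C : {set V}, disjoint_triple A B C ->
          (represented u A B C <-> msep d b A B C)) :
  forall S : {set V},
    (in_SG d b S -> char_imset u S = 1) /\
    (~ in_SG d b S -> S != set0 -> char_imset u S <= 0).
Proof.
case: HG => [[_ _ b_sym] d_acyclic b_not_anc _] S.
have repE x y C : elementary_index x y C ->
    represented u [set x] [set y] C <-> msep d b [set x] [set y] C.
  by move/elementary_disjoint; apply: HI.
rewrite /char_imset -/(upper_sum u S); split=> [SG | nSG S0].
  rewrite (upper_sum_structural_eq0 Hu) ?subr0 // => x y C ei /and3P[xS yS SC] /(repE _ _ _ ei).
  have /and3P[xy _ _] := ei.
  exact: (in_SG_not_msep b_sym d_acyclic b_not_anc SG xS yS xy SC).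
have [x [y [C [ei xS yS SC sep]]]] := not_in_SG_sep b_sym d_acyclic b_not_anc S0 nSG.
rewrite subr_le0 (upper_sum_represented_ge1 ei) //; first by rewrite /in_elementary_range xS yS.
exact/repE.
Qed.
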